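(* Let $\mathcal{X}$ be a finite set and $X=(X_1,\dots,X_n)$ a random vector in $\mathcal{X}^n$ satisfying a $\mathfrak{d}$-LSI$(\sigma^2)$. Let $\mathcal{F}$ be a family of functions $f:\mathcal{X}\to\mathbb{R}$ and for each $f$ let $c(f)\ge0$ satisfy $|f(x)-f(y)|\le c(f)$ for all $x,y\in\mathcal{X}$, with $\sup_{f\in\mathcal{F}}c(f)<\infty$. Let $g=g(X)=\sup_{f\in\mathcal{F}}\big|\sum_{j=1}^nf(X_j)\big|$. Then for every $t\ge0$, \[ \mathbb{P}(g\ge\mathbb{E}g+t)\le2\exp\Big(-\frac{t^2}{15\sigma^2n\sup_{f\in\mathcal{F}}c(f)^2}\Big). \]
   Context: $\mathfrak{d}$-LSI$(\sigma^2)$: with $\mu$ the law of $X$ and $\mu(\cdot\mid x_{i^c})$ the conditional law of $X_i$ given $X_j=x_j$ ($j\neq i$), set $\mathfrak{d}_iF(x)^2=\mathrm{Var}_{\mu(\cdot\mid x_{i^c})}(F(x_{i^c},\cdot))$ and $|\mathfrak{d}F|^2=\sum_i\mathfrak{d}_iF^2$; $\mu$ satisfies it if $\mathrm{Ent}_\mu(F^2)\le2\sigma^2\int|\mathfrak{d}F|^2d\mu$ for all $F:\mathcal{X}^n\to\mathbb{R}$, where $\mathrm{Ent}_\mu(h)=\int h\log h\,d\mu-\int h\,d\mu\log\int h\,d\mu$. *)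

From Stdlib Require Import Reals.
From mathcomp Require Import all_boot.

Set Implicit Arguments.
Unset Strict Implicit.
Unset Printing Implicit Defensive.

Local Open Scope R_scope.

Definition rsum (I : finType) (F : I -> R) : R := \big[Rplus/0]_(i : I) F i.

Definition config (T : finType) (n : nat) := {ffun 'I_n -> T}.

Definition upd (T : finType) (n : nat) (x : config T n) (i : 'I_n) (a : T)
  : config T n := [ffun j => if j == i then a else x j].

Definition is_prob (I : finType) (mu : I -> R) : Prop :=
  (forall x, 0 <= mu x) /\ rsum mu = 1.

Definition Exp (I : finType) (mu : I -> R) (F : I -> R) : R :=
  rsum (fun x => mu x * F x).

Definition Ent (I : finType) (mu : I -> R) (h : I -> R) : R :=
  Exp mu (fun x => h x * ln (h x)) - Exp mu h * ln (Exp mu h).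

Definition Prob (I : finType) (mu : I -> R) (A : I -> Prop)
  (Adec : forall x, {A x} + {~ A x}) : R :=
  rsum (fun x => if Adec x then mu x else 0).
Arguments Prob {I} mu {A} Adec.

(* Conditional law mu(. | x_{i^c}) of X_i given X_j = x_j (j <> i):
   p(a) = mu(x[i:=a]) / sum_b mu(x[i:=b]). (When the denominator is 0 all
   numerators are 0 as well, so p = 0; such x have mu-mass 0.) *)
Definition cond (T : finType) (n : nat) (mu : config T n -> R)
  (x : config T n) (i : 'I_n) (a : T) : R :=
  mu (upd x i a) / rsum (fun b => mu (upd x i b)).

(* dd_i F(x)^2 = Var_{mu(.|x_{i^c})} (F(x_{i^c}, .)). *)
Definition dsq (T : finType) (n : nat) (mu : config T n -> R)
  (F : config T n -> R) (i : 'I_n) (x : config T n) : R :=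
  let p := cond mu x i in
  let m := rsum (fun a => p a * F (upd x i a)) in
  rsum (fun a => p a * (F (upd x i a) - m) ^ 2).

Definition dnorm2 (T : finType) (n : nat) (mu : config T n -> R)
  (F : config T n -> R) (x : config T n) : R :=
  rsum (fun i => dsq mu F i x).

Definition dLSI (T : finType) (n : nat) (mu : config T n -> R) (sigma2 : R)
  : Prop :=
  forall F : config T n -> R,
    Ent mu (fun x => F x ^ 2) <= 2 * sigma2 * Exp mu (dnorm2 mu F).

(* Herbst's argument.  Since g is a supremum of sums of functions of single
   coordinates, changing one coordinate moves g by at most c := sup c(f).
   Applied to F = exp (l g / 2), this bounds each conditional variance by
   l^2 c^2 times the conditional mean of exp (l g), so the d-LSI yields the
   modified inequality Ent (exp (l g)) <= 2 sigma^2 n c^2 l^2 E exp (l g).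
   This is a differential inequality for l |-> ln E exp (l g) / l, which
   gives the sub-Gaussian bound ln E exp (l (g - E g)) <= 2 sigma^2 n c^2 l^2;
   Chernoff's bound then gives the tail exp (-t^2 / (8 sigma^2 n c^2)). *)
From HB Require Import structures.
From Stdlib Require Import Reals Lra FunctionalExtensionality Classical.
From mathcomp Require Import all_boot.
Local Open Scope R_scope.
Set Implicit Arguments. Unset Strict Implicit.

Lemma Rplus_associative : associative Rplus. Proof. by move=> a b c; ring. Qed.
HB.instance Definition _ :=
  Monoid.isComLaw.Build R 0 Rplus Rplus_associative Rplus_comm Rplus_0_l.

Section FiniteSums.
Variable I : finType.
Implicit Types F G : I -> R.

Lemma rsum_ext F G : (forall x, F x = G x) -> rsum F = rsum G.
Proof. by move=> FG; apply: eq_bigr => i _; exact: FG. Qed.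

Lemma rsum_le F G : (forall x, F x <= G x) -> rsum F <= rsum G.
Proof.
move=> FG; apply: (big_rec2 (fun a b => a <= b)); first lra.
by move=> i a b _ ab; have := FG i; lra.
Qed.

Lemma rsum_plus F G : rsum (fun x => F x + G x) = rsum F + rsum G.
Proof. exact: big_split. Qed.

Lemma rsum_scal_l k F : rsum (fun x => k * F x) = k * rsum F.
Proof.
apply: (big_rec2 (fun a b => a = k * b)); first ring.
by move=> i a b _ ->; ring.
Qed.

Lemma rsum_scal_r k F : rsum (fun x => F x * k) = rsum F * k.
Proof.
rewrite (rsum_ext (G := fun x => k * F x)) ?rsum_scal_l; first ring.
by move=> x; ring.
Qed.

Lemma rsum_minus F G : rsum (fun x => F x - G x) = rsum F - rsum G.
Proof.
rewrite (rsum_ext (G := fun x => F x + (-1) * G x)) ?rsum_plus ?rsum_scal_l.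
  ring.
by move=> x; ring.
Qed.

Lemma rsum_0 : rsum (fun _ : I => 0) = 0.
Proof. exact: big1. Qed.

Lemma rsum_ge0 F : (forall x, 0 <= F x) -> 0 <= rsum F.
Proof. by move=> F0; rewrite -rsum_0; exact: rsum_le. Qed.

Lemma rsum_D1 F j : rsum F = F j + \big[Rplus/0]_(i | i != j) F i.
Proof. exact: bigD1. Qed.

Lemma rsum_ge_term F j : (forall x, 0 <= F x) -> F j <= rsum F.
Proof.
move=> F0; rewrite (rsum_D1 _ j).
suff : 0 <= \big[Rplus/0]_(i | i != j) F i by lra.
by apply: (big_rec (fun a => 0 <= a)) => [|i a _ a0]; [lra | have := F0 i; lra].
Qed.

Lemma rsum_exchange (J : finType) (H : I -> J -> R) :
  rsum (fun x => rsum (fun j => H x j)) = rsum (fun j => rsum (fun x => H x j)).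
Proof. exact: exchange_big. Qed.

(* [p] may also be the junk law 0 that [cond] returns off the support. *)
Lemma variance_le_sqdev (p Y : I -> R) k :
  rsum p = 1 \/ (forall a, p a = 0) ->
  rsum (fun a => p a * (Y a - rsum (fun b => p b * Y b)) ^ 2)
  <= rsum (fun a => p a * (Y a - k) ^ 2).
Proof.
case=> [p1 | p0]; last first.
  have rsum_p0 (Y' : I -> R) : rsum (fun a => p a * Y' a) = 0.
    by rewrite (rsum_ext (G := fun _ => 0)) ?rsum_0 // => a; rewrite p0; ring.
  by rewrite (rsum_p0 (fun a => (Y a - k) ^ 2)) rsum_p0; lra.
set m := rsum (fun b => p b * Y b).
rewrite [X in _ <= X](rsum_ext (G := fun a => p a * (Y a - m) ^ 2
                            + (2 * (p a * Y a) - (m + k) * p a) * (m - k))).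
  rewrite rsum_plus rsum_scal_r rsum_minus !rsum_scal_l -/m p1.
  have := pow2_ge_0 (m - k); nra.
by move=> a; ring.
Qed.

Lemma Prob_le1 (mu : I -> R) (A : I -> Prop) (Adec : forall x, {A x} + {~ A x}) :
  is_prob mu -> Prob mu Adec <= 1.
Proof.
case=> mu0 mu1; rewrite /Prob -mu1; apply: rsum_le => x.
by case: is_left; have := mu0 x; lra.
Qed.

End FiniteSums.

Lemma rsum_const (n : nat) (k : R) : rsum (fun _ : 'I_n => k) = INR n * k.
Proof.
rewrite /rsum; elim: n => [|n IH]; first by rewrite big_ord0 /=; ring.
by rewrite big_ord_recr /= IH; case: n {IH} => [|n] /=; ring.
Qed.

Section Update.
Variables (T : finType) (n : nat).
Implicit Types (x : config T n) (i : 'I_n).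

Lemma upd_at x i a : upd x i a i = a.
Proof. by rewrite ffunE eqxx. Qed.

Lemma upd_upd x i a b : upd (upd x i a) i b = upd x i b.
Proof. by apply/ffunP => j; rewrite !ffunE; case: eqP. Qed.

Lemma upd_id x i : upd x i (x i) = x.
Proof. by apply/ffunP => j; rewrite !ffunE; case: eqP => [->|]. Qed.

Lemma upd_other x i a j : j != i -> upd x i a j = x j.
Proof. by rewrite ffunE => /negbTE ->. Qed.

Lemma rsum_upd_sub (f : T -> R) x i a :
  rsum (fun j => f (upd x i a j)) - rsum (fun j => f (x j)) = f a - f (x i).
Proof.
rewrite -rsum_minus (rsum_D1 _ i) upd_at big1 ?Rplus_0_r //.
by move=> j ji; rewrite upd_other //; ring.
Qed.

End Update.

Section ConditionalLaw.
Variables (T : finType) (n : nat) (mu : config T n -> R).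
Hypothesis mu_ge0 : forall x, 0 <= mu x.

Lemma cond_ge0 x i a : 0 <= cond mu x i a.
Proof.
rewrite /cond /Rdiv.
have [-> | Z0] := Req_dec (rsum (fun b => mu (upd x i b))) 0.
  by rewrite Rinv_0 Rmult_0_r; lra.
apply: Rle_mult_inv_pos => //.
by have := rsum_ge0 (fun b => mu_ge0 (upd x i b)); lra.
Qed.

Lemma cond_mass x i : rsum (cond mu x i) = 1 \/ (forall a, cond mu x i a = 0).
Proof.
rewrite /cond /Rdiv.
have [-> | Z0] := Req_dec (rsum (fun b => mu (upd x i b))) 0.
  by right => a; rewrite Rinv_0; ring.
by left; rewrite (rsum_scal_r _ (fun a => mu (upd x i a))); field.
Qed.

(* Reindexing by the involution (x, a) |-> (x[i:=a], x_i) of config * T. *)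
Lemma Exp_cond (i : 'I_n) (h : config T n -> R) :
  Exp mu (fun x => rsum (fun a => cond mu x i a * h (upd x i a))) = Exp mu h.
Proof.
set Z := fun y => rsum (fun b => mu (upd y i b)).
pose F x a := mu x * (cond mu x i a * h (upd x i a)).
have -> : Exp mu (fun x => rsum (fun a => cond mu x i a * h (upd x i a)))
          = \big[Rplus/0]_(x : config T n) \big[Rplus/0]_(a : T) F x a.
  by apply: rsum_ext => x; rewrite -rsum_scal_l.
rewrite pair_big /=.
pose swap p : config T n * T := (upd p.1 i p.2, p.1 i).
have swapK : involutive swap by case=> x a; rewrite /swap /= upd_upd upd_id upd_at.
rewrite (reindex_inj (inv_inj swapK)) /=.
rewrite -(pair_big predT predT (fun y b => F (upd y i b) (y i))) /=.
apply: rsum_ext => y; rewrite -/(rsum _).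
have Z_upd b : Z (upd y i b) = Z y by apply: rsum_ext => b'; rewrite upd_upd.
rewrite (rsum_ext (G := fun b => mu (upd y i b) * (mu y * / Z y * h y))); last first.
  by move=> b; rewrite /F /cond upd_upd upd_id -/(Z _) Z_upd /Rdiv; ring.
rewrite rsum_scal_r -/(Z y).
have [Zy0 | Zy0] := Req_dec (Z y) 0; last by field.
have mu_le_Z : mu y <= Z y by rewrite /Z -{1}(upd_id y i); exact: rsum_ge_term.
have mu_y0 : mu y = 0 by have := mu_ge0 y; lra.
by rewrite mu_y0; ring.
Qed.

End ConditionalLaw.

Lemma exp_le_exp x y : x <= y -> exp x <= exp y.
Proof. by case=> [xy | ->]; [exact/Rlt_le/exp_increasing | exact: Rle_refl]. Qed.

(* [exp u - exp v = exp u (1 - exp (v - u))] and [1 - exp (-s) <= s]. *)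
Lemma exp_sub_sq_le u v d :
  0 <= u - v -> u - v <= d -> (exp u - exp v) ^ 2 <= d ^ 2 * exp (2 * u).
Proof.
move=> vu uvd.
have ev : exp v = exp u * exp (v - u) by rewrite -exp_plus; f_equal; ring.
have lin := exp_ineq1_le (v - u).
have eu := exp_pos u.
have evu : exp (v - u) <= 1 by rewrite -exp_0; apply: exp_le_exp; lra.
have diff_ge0 : 0 <= exp u - exp v by rewrite ev; nra.
have diff_le : exp u - exp v <= d * exp u by rewrite ev; nra.
have -> : exp (2 * u) = exp u * exp u by rewrite -exp_plus; f_equal; ring.
nra.
Qed.

Lemma sup_abs_sum_upd_le (T : finType) (n : nat) (Fam : (T -> R) -> Prop)
    (c : (T -> R) -> R) (supc : R) (g : config T n -> R) :
  (forall f, Fam f -> forall x y : T, Rabs (f x - f y) <= c f) ->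
  is_lub (fun r => exists f, Fam f /\ r = c f) supc ->
  (forall x : config T n,
     is_lub (fun r => exists f, Fam f /\ r = Rabs (rsum (fun j : 'I_n => f (x j))))
            (g x)) ->
  forall x i a, g (upd x i a) <= g x + supc.
Proof.
move=> c_osc [supc_ub _] g_lub x i a.
have [_ g_least] := g_lub (upd x i a); apply: g_least => _ [f [Ff ->]].
have [g_ub _] := g_lub x.
have cf_le : c f <= supc by apply: supc_ub; exists f.
have := rsum_upd_sub f x i a.
set S := rsum (fun j => f (x j)); set S' := rsum _ => diffE.
have sum_le : Rabs S <= g x by apply: g_ub; exists f.
have -> : S' = S + (f a - f (x i)) by lra.
have := Rabs_triang S (f a - f (x i)); have := c_osc f Ff a (x i); lra.
Qed.

Section ModifiedLSI.
Variables (T : finType) (n : nat) (mu : config T n -> R) (g : config T n -> R) (c : R).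
Hypothesis mu_ge0 : forall x, 0 <= mu x.
Hypothesis g_upd : forall x i a, g (upd x i a) <= g x + c.

(* Compare with the constant [exp (l (g x - c) / 2)], which lies below every
   value of [exp (l g / 2)] on the fibre through [x]. *)
Lemma dsq_exp_le l x i : 0 <= l ->
  dsq mu (fun y => exp (l * g y / 2)) i x
  <= (l * c) ^ 2 * rsum (fun a => cond mu x i a * exp (l * g (upd x i a))).
Proof.
move=> l_ge0; rewrite /dsq /=.
apply: (Rle_trans _ _ _
  (variance_le_sqdev _ (exp (l * (g x - c) / 2)) (cond_mass mu x i))).
rewrite -rsum_scal_l; apply: rsum_le => a.
have -> : (l * c) ^ 2 * (cond mu x i a * exp (l * g (upd x i a)))
          = cond mu x i a * ((l * c) ^ 2 * exp (2 * (l * g (upd x i a) / 2))).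
  by rewrite (_ : 2 * (l * g (upd x i a) / 2) = l * g (upd x i a)); [ring | field].
apply: Rmult_le_compat_l; first exact: cond_ge0.
have lower := g_upd (upd x i a) i (x i); rewrite upd_upd upd_id in lower.
have upper := g_upd x i a.
apply: exp_sub_sq_le; nra.
Qed.

Lemma Ent_exp_le (s2 l : R) : 0 <= s2 -> 0 <= l -> dLSI mu s2 ->
  Ent mu (fun x => exp (l * g x))
  <= 2 * s2 * INR n * (l * c) ^ 2 * Exp mu (fun x => exp (l * g x)).
Proof.
move=> s2_ge0 l_ge0 lsi.
have sq_half : (fun x => exp (l * g x / 2) ^ 2) = (fun x => exp (l * g x)).
  apply: functional_extensionality => x.
  by rewrite /= Rmult_1_r -exp_plus; f_equal; field.
have := lsi (fun x => exp (l * g x / 2)); rewrite sq_half => /Rle_trans; apply.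
set L := Exp mu (fun x => exp (l * g x)).
rewrite (_ : 2 * s2 * INR n * (l * c) ^ 2 * L = 2 * s2 * (INR n * ((l * c) ^ 2 * L)));
  last by ring.
apply: Rmult_le_compat_l; first lra.
apply: (Rle_trans _ (Exp mu (fun x => rsum (fun i => (l * c) ^ 2
          * rsum (fun a => cond mu x i a * exp (l * g (upd x i a))))))).
  apply: rsum_le => x; apply: Rmult_le_compat_l => //.
  by apply: rsum_le => i; exact: dsq_exp_le.
rewrite /Exp (rsum_ext (G := fun x => rsum (fun i => mu x * ((l * c) ^ 2
          * rsum (fun a => cond mu x i a * exp (l * g (upd x i a))))))).
  rewrite rsum_exchange -rsum_const; apply/Req_le/rsum_ext => i.
  rewrite /L -(Exp_cond mu_ge0 i (fun y => exp (l * g y))) -rsum_scal_l.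
  by apply: rsum_ext => x; ring.
by move=> x; rewrite -rsum_scal_l.
Qed.

End ModifiedLSI.

Lemma derivable_pt_lim_rsum (I : finType) (f df : I -> R -> R) l :
  (forall i, derivable_pt_lim (f i) l (df i l)) ->
  derivable_pt_lim (fun y => rsum (fun i => f i y)) l (rsum (fun i => df i l)).
Proof.
move=> f_deriv; rewrite /rsum; elim: (index_enum I) => [|a s IH].
  rewrite big_nil; apply: (derivable_pt_lim_ext (fun _ => 0)).
    by move=> y; rewrite big_nil.
  exact: derivable_pt_lim_const.
rewrite big_cons.
apply: (derivable_pt_lim_ext (fun y => f a y + \big[Rplus/0]_(i <- s) f i y)).
  by move=> y; rewrite big_cons.
exact: derivable_pt_lim_plus (f_deriv a) IH.
Qed.

Lemma derivable_pt_lim_exp_mul a l :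
  derivable_pt_lim (fun y => exp (y * a)) l (a * exp (l * a)).
Proof.
have lin : derivable_pt_lim (fun y => y * a) l a.
  rewrite -[X in derivable_pt_lim _ _ X]Rmult_1_l.
  exact: derivable_pt_lim_scal_right (derivable_pt_lim_id l).
rewrite Rmult_comm.
exact: derivable_pt_lim_comp lin (derivable_pt_lim_exp (l * a)).
Qed.

Section Herbst.
Variables (I : finType) (mu g : I -> R) (K : R).
Hypothesis mu_ge0 : forall x, 0 <= mu x.
Hypothesis mu_sum1 : rsum mu = 1.

Definition mgf l := Exp mu (fun x => exp (l * g x)).
Definition mgf' l := Exp mu (fun x => g x * exp (l * g x)).

Lemma mgf_gt0 l : 0 < mgf l.
Proof.
have [x mu_x] : exists x, 0 < mu x.
  apply: NNPP => no_pos.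
  have : rsum mu <= rsum (fun _ : I => 0).
    by apply: rsum_le => x; apply: Rnot_lt_le => ?; apply: no_pos; exists x.
  by rewrite rsum_0; lra.
apply: (Rlt_le_trans _ (mu x * exp (l * g x))).
  exact: Rmult_lt_0_compat (exp_pos _).
rewrite /mgf /Exp; apply: (@rsum_ge_term _ (fun y => mu y * exp (l * g y)) x) => y.
exact: Rmult_le_pos (Rlt_le _ _ (exp_pos _)).
Qed.

Lemma mgf0 : mgf 0 = 1.
Proof. by rewrite -mu_sum1; apply: rsum_ext => x; rewrite Rmult_0_l exp_0; ring. Qed.

Lemma mgf'0 : mgf' 0 = Exp mu g.
Proof. by apply: rsum_ext => x; rewrite Rmult_0_l exp_0; ring. Qed.

Lemma mgf_deriv l : derivable_pt_lim mgf l (mgf' l).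
Proof.
apply: (derivable_pt_lim_ext (fun y => rsum (fun x => mu x * exp (y * g x)))) => //.
apply: (@derivable_pt_lim_rsum _ (fun x y => mu x * exp (y * g x))
          (fun x y => mu x * (g x * exp (y * g x)))) => x.
exact: derivable_pt_lim_scal (derivable_pt_lim_exp_mul (g x) l).
Qed.

Lemma Ent_exp_mgf l :
  Ent mu (fun x => exp (l * g x)) = l * mgf' l - mgf l * ln (mgf l).
Proof.
rewrite /Ent -/(mgf l); congr (_ - _).
by rewrite /mgf' /Exp -rsum_scal_l; apply: rsum_ext => x; rewrite ln_exp; ring.
Qed.

Hypothesis Ent_exp_bound :
  forall l, 0 < l -> Ent mu (fun x => exp (l * g x)) <= K * l ^ 2 * mgf l.

Let psi l := ln (mgf l) - l * Exp mu g - K * l ^ 2.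

Lemma psi_deriv l : derivable_pt_lim psi l (mgf' l / mgf l - Exp mu g - 2 * K * l).
Proof.
have ln_mgf : derivable_pt_lim (fun y => ln (mgf y)) l (/ mgf l * mgf' l) :=
  derivable_pt_lim_comp _ _ _ _ _ (mgf_deriv l) (derivable_pt_lim_ln _ (mgf_gt0 l)).
have lin : derivable_pt_lim (fun y => y * Exp mu g) l (1 * Exp mu g) :=
  derivable_pt_lim_scal_right _ _ _ _ (derivable_pt_lim_id l).
have sq : derivable_pt_lim (fun y => K * y ^ 2) l (K * (INR 2 * l ^ 1)) :=
  derivable_pt_lim_scal _ K _ _ (derivable_pt_lim_pow l 2).
have := derivable_pt_lim_minus _ _ _ _ _
          (derivable_pt_lim_minus _ _ _ _ _ ln_mgf lin) sq.
rewrite (_ : / mgf l * mgf' l - 1 * Exp mu g - K * (INR 2 * l ^ 1)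
             = mgf' l / mgf l - Exp mu g - 2 * K * l); last by rewrite /Rdiv /=; ring.
exact: derivable_pt_lim_ext.
Qed.

Lemma psi0 : psi 0 = 0.
Proof. by rewrite /psi mgf0 ln_1 /=; ring. Qed.

Lemma psi_deriv0 : derivable_pt_lim psi 0 0.
Proof.
apply: (derivable_pt_lim_ext psi) => //.
by have := psi_deriv 0; rewrite mgf0 mgf'0 /Rdiv Rinv_1 (_ : _ - _ - _ = 0) //; ring.
Qed.

Lemma psi_div_deriv l : 0 < l ->
  derivable_pt_lim (fun y => psi y / y) l
    ((Ent mu (fun x => exp (l * g x)) / mgf l - K * l ^ 2) / l ^ 2).
Proof.
move=> l_gt0; have mgf_pos := mgf_gt0 l.
have := derivable_pt_lim_div _ _ _ _ _ (psi_deriv l) (derivable_pt_lim_id l)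
          (Rgt_not_eq _ _ l_gt0).
rewrite Ent_exp_mgf /Rsqr /id (_ : ((_ * l - 1 * psi l) / (l * l))
          = ((l * mgf' l - mgf l * ln (mgf l)) / mgf l - K * l ^ 2) / l ^ 2);
  last by rewrite /psi; field; lra.
exact: derivable_pt_lim_ext.
Qed.

Lemma psi_div_nonincreasing a b : 0 < a -> a <= b -> psi b / b <= psi a / a.
Proof.
move=> a_gt0 [ab | <-]; last exact: Rle_refl.
have [l [mvt [al lb]]] := MVT_cor2 _ _ _ _ ab
  (fun l l_in => psi_div_deriv (Rlt_le_trans _ _ _ a_gt0 (proj1 l_in))).
have l_gt0 : 0 < l by lra.
have := Ent_exp_bound l_gt0; have := mgf_gt0 l => mgf_pos ent_le.
have ent_ratio : Ent mu (fun x => exp (l * g x)) / mgf l - K * l ^ 2 <= 0.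
  apply: (Rmult_le_reg_r (mgf l)) => //.
  by rewrite Rmult_minus_distr_r /Rdiv Rmult_assoc Rinv_l; lra.
have inv_pos : 0 < / l ^ 2 by apply: Rinv_0_lt_compat; nra.
set D := (_ / mgf l - K * l ^ 2) / l ^ 2 in mvt.
have D_le0 : D <= 0 by rewrite /D /Rdiv in ent_ratio *; nra.
nra.
Qed.

(* Herbst's bound: [psi l / l] decreases and tends to [psi'(0) = 0] at [0+]. *)
Lemma ln_mgf_le l : 0 <= l -> ln (mgf l) <= l * Exp mu g + K * l ^ 2.
Proof.
case=> [l_gt0 | <-]; last by rewrite mgf0 ln_1 /=; lra.
suff : psi l <= 0 by rewrite /psi; lra.
apply: Rnot_lt_le => psi_pos.
have q_pos : 0 < psi l / l by apply: Rdiv_lt_0_compat.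
have [d near0] := psi_deriv0 q_pos.
set h := Rmin (d / 2) l.
have d_pos := cond_pos d.
have h_pos : 0 < h by apply: Rmin_pos; lra.
have h_le : h <= l by apply: Rmin_r.
have h_lt : h < d by have := Rmin_l (d / 2) l; rewrite -/h; lra.
have := near0 h (Rgt_not_eq _ _ h_pos) ltac:(rewrite Rabs_pos_eq; lra).
rewrite Rplus_0_l psi0 !Rminus_0_r => close.
have := Rle_abs (psi h / h); have := psi_div_nonincreasing h_pos h_le; lra.
Qed.

End Herbst.

Lemma Prob_ge_le_mgf (I : finType) (mu g : I -> R) s l :
  (forall x, 0 <= mu x) -> 0 <= l ->
  Prob mu (fun x => Rle_dec s (g x)) <= exp (- l * s) * mgf mu g l.
Proof.
move=> mu_ge0 l_ge0; rewrite /mgf /Exp -rsum_scal_l; apply: rsum_le => x.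
rewrite (_ : exp (- l * s) * (mu x * exp (l * g x)) = mu x * exp (l * (g x - s)));
  last by rewrite Rmult_comm Rmult_assoc -exp_plus; do 2 f_equal; ring.
have := mu_ge0 x; have := exp_pos (l * (g x - s)).
case: Rle_dec => /= [s_le | _]; last by nra.
have : 1 <= exp (l * (g x - s)) by rewrite -exp_0; apply: exp_le_exp; nra.
nra.
Qed.

(* Chernoff's bound at the optimal [l = t / (2 K)]. *)
Lemma Prob_tail_le (I : finType) (mu g : I -> R) (K t : R) :
  is_prob mu ->
  (forall l, 0 < l -> Ent mu (fun x => exp (l * g x)) <= K * l ^ 2 * mgf mu g l) ->
  0 < K -> 0 <= t ->
  Prob mu (fun x => Rle_dec (Exp mu g + t) (g x)) <= exp (- t ^ 2 / (4 * K)).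
Proof.
move=> [mu_ge0 mu_sum1] ent_le K_gt0 t_ge0.
set l := t / (2 * K).
have l_ge0 : 0 <= l by rewrite /l /Rdiv; apply: Rle_mult_inv_pos; lra.
apply: (Rle_trans _ _ _ (Prob_ge_le_mgf _ _ mu_ge0 l_ge0)).
rewrite -(exp_ln _ (mgf_gt0 g mu_ge0 mu_sum1 l)) -exp_plus; apply: exp_le_exp.
have := ln_mgf_le mu_ge0 mu_sum1 ent_le l_ge0.
have -> : - t ^ 2 / (4 * K) = - l * (Exp mu g + t) + (l * Exp mu g + K * l ^ 2).
  by rewrite /l; field; lra.
lra.
Qed.

Theorem proposition1p4
  (T : finType) (n : nat)
  (mu : config T n -> R)            (* law of X = (X_1,...,X_n) on T^n *)
  (sigma : R)
  (Fam : (T -> R) -> Prop)          (* the family F *)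
  (c : (T -> R) -> R)
  (supc : R)                        (* sup_{f in F} c(f) *)
  (g : config T n -> R)             (* g(x) = sup_{f in F} |sum_j f(x_j)| *)
  (t : R) :
  is_prob mu ->
  dLSI mu (sigma ^ 2) ->
  (forall f, Fam f -> 0 <= c f) ->
  (forall f, Fam f -> forall x y : T, Rabs (f x - f y) <= c f) ->
  is_lub (fun r => exists f, Fam f /\ r = c f) supc ->
  (forall x : config T n,
     is_lub (fun r => exists f, Fam f /\ r = Rabs (rsum (fun j : 'I_n => f (x j))))
            (g x)) ->
  0 <= t ->
  Prob mu (fun x => Rle_dec (Exp mu g + t) (g x))
  <= 2 * exp (- (t ^ 2) / (15 * sigma ^ 2 * INR n * supc ^ 2)).
Proof.
move=> [mu_ge0 mu_sum1] lsi _ c_osc supc_lub g_lub t_ge0.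
set A := sigma ^ 2 * INR n * supc ^ 2.
have -> : 15 * sigma ^ 2 * INR n * supc ^ 2 = 15 * A by rewrite /A; ring.
have A_ge0 : 0 <= A.
  by apply: Rmult_le_pos; [apply: Rmult_le_pos; [apply: pow2_ge_0 | apply: pos_INR] |
                           apply: pow2_ge_0].
have Prob_le_1 :=
  Prob_le1 (fun x => Rle_dec (Exp mu g + t) (g x)) (conj mu_ge0 mu_sum1).
(* For [A = 0] the bound is [2 * exp 0], as [/ 0 = 0]. *)
have [A0 | A_gt0] : A = 0 \/ 0 < A by lra.
  by rewrite A0 Rmult_0_r /Rdiv Rinv_0 Rmult_0_r exp_0; lra.
have ent_le l : 0 < l ->
    Ent mu (fun x => exp (l * g x)) <= 2 * A * l ^ 2 * mgf mu g l.
  move=> l_gt0; rewrite /mgf /A.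
  have := Ent_exp_le mu_ge0 (sup_abs_sum_upd_le c_osc supc_lub g_lub)
            (pow2_ge_0 sigma) (Rlt_le _ _ l_gt0) lsi.
  by rewrite (_ : 2 * sigma ^ 2 * INR n * (l * supc) ^ 2
                 = 2 * (sigma ^ 2 * INR n * supc ^ 2) * l ^ 2) //; ring.
apply: (Rle_trans _ _ _ (Prob_tail_le (conj mu_ge0 mu_sum1) ent_le _ t_ge0)); first lra.
have : exp (- t ^ 2 / (4 * (2 * A))) <= exp (- t ^ 2 / (15 * A)).
  apply: exp_le_exp; rewrite /Rdiv !Ropp_mult_distr_l_reverse; apply: Ropp_le_contravar.
  apply: Rmult_le_compat_l; first exact: pow2_ge_0.
  apply: Rinv_le_contravar; lra.
have := exp_pos (- t ^ 2 / (15 * A)); lra.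
Qed.
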